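(* Let $p\in(1/2,1)$. For $\epsilon\in[0,1)$ not equal to any $\epsilon_m$, let $m=m(\epsilon)$ be the unique integer $m\ge1$ with $\epsilon\in(\epsilon_m,\epsilon_{m+1})$, and define integers $r_1(\epsilon),r_2(\epsilon),\ldots$ by $r_1=m+1$ and, for $n\ge2$, $r_n=m$ if $\sum_{i=1}^{n-1}(r_i\eta-1)+m\eta>1$ and $r_n=m+1$ otherwise. Fix an integer $r\ge1$. Then for every $i\ge2$, $r_i(\epsilon)\to r$ as $\epsilon\to\epsilon_r$ (i.e. $r_i(\epsilon)=r$ for all such $\epsilon$ sufficiently close to $\epsilon_r$; for $r=1$ this is understood as $\epsilon\to\epsilon_1^+$).
   Context: Let $\alpha=p/(1-p)$ and for $r=1,2,\ldots$ let $\epsilon_r=\dfrac{\alpha-\alpha^{1/r}}{\alpha^{1/r+1}-1}$ (an increasing sequence with $\epsilon_1=0$ and $\epsilon_r\to1$). For $\epsilon\in[0,1)$ let $a=p+(1-p)\epsilon$, $b=p(1-\epsilon)$ and $\eta=\eta(\epsilon)=\log\big(a/(1-b)\big)/\log\alpha$. The integer $r_n$ is the number of consecutive $Y$ observations needed, in the $n$-th stage of an enumeration of paths, for the walk (starting at $0$, up-steps $\eta$, down-steps $1$, stopped on leaving $[-1,1]$) to exceed $1$. *)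

From Stdlib Require Import Reals Lra.
Open Scope R_scope.

Definition alpha (p : R) : R := p / (1 - p).

Definition eps_seq (p : R) (r : nat) : R :=
  (alpha p - Rpower (alpha p) (1 / INR r)) /
  (Rpower (alpha p) (1 / INR r + 1) - 1).

Definition eta (p eps : R) : R :=
  let a := p + (1 - p) * eps in
  let b := p * (1 - eps) in
  ln (a / (1 - b)) / ln (alpha p).

(* r_aux m e k = (r_{k+1}, S_{k+1}) where S_n = sum_{i=1}^n (r_i * e - 1).
   r_1 = m+1; for n >= 2, r_n = m if S_{n-1} + m e > 1, else m+1. *)
Fixpoint r_aux (m : nat) (e : R) (k : nat) : nat * R :=
  match k with
  | O => (S m, INR (S m) * e - 1)
  | S k' =>
      let S_prev := snd (r_aux m e k') in
      let rn := if Rlt_dec 1 (S_prev + INR m * e) then m else S m in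
      (rn, S_prev + INR rn * e - 1)
  end.

(* r_n (indexed from n = 1; the value at n = 0 is irrelevant) *)
Definition r_seq (m : nat) (e : R) (n : nat) : nat := fst (r_aux m e (pred n)).

(* eta is a strictly decreasing function of eps, with inverse
   x |-> (alpha - alpha^x) / (alpha^(x+1) - 1); thus eta(eps_r) = 1/r and
   eps_m < eps < eps_(m+1) says exactly 1/(m+1) < eta < 1/m.  For eps close to
   eps_r, eta is close to 1/r, which leaves only m = r (eta just below 1/r) and
   m = r - 1 (eta just above).  If m = r, the partial sums are
   S_k = k (r eta - 1) + eta and the test S_(k-1) + r eta > 1 holds as long as
   k (1 - r eta) < eta, so r_2 = ... = r_i = r; if m = r - 1, S_k = k (r eta - 1)
   and the test fails as long as k (r eta - 1) <= eta, so every r_n = m + 1 = r.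
   A window |eta - 1/r| < 1/(r (i r + 1)) keeps both regimes alive up to n = i. *)

From Stdlib Require Import Reals Lra Lia.
Open Scope R_scope.

(* [eps_seq p r] unfolds to [eta_inv p (1 / INR r)]. *)
Definition eta_inv (p x : R) : R :=
  (alpha p - Rpower (alpha p) x) / (Rpower (alpha p) (x + 1) - 1).

Lemma Rpower_gt_1 (a y : R) : 1 < a -> 0 < y -> 1 < Rpower a y.
Proof.
  intros Ha Hy; pose proof (Rpower_lt a 0 y Ha Hy) as H.
  rewrite Rpower_O in H; lra.
Qed.

Lemma inv_lt_iff_one_lt_mul (x e : R) : 0 < x -> (1 / x < e <-> 1 < x * e).
Proof.
  intros Hx; replace 1 with (x * (1 / x)) at 2 by (field; lra).
  split; [apply Rmult_lt_compat_l | apply Rmult_lt_reg_l]; assumption.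
Qed.

Lemma lt_inv_iff_mul_lt_one (x e : R) : 0 < x -> (e < 1 / x <-> x * e < 1).
Proof.
  intros Hx; replace 1 with (x * (1 / x)) at 2 by (field; lra).
  split; [apply Rmult_lt_compat_l | apply Rmult_lt_reg_l]; assumption.
Qed.

Section Eta.

Variable p : R.
Hypothesis hp : 1 / 2 < p < 1.

Lemma alpha_gt1 : 1 < alpha p.
Proof.
  unfold alpha; apply (Rmult_lt_reg_r (1 - p)); [lra|].
  unfold Rdiv; rewrite Rmult_assoc, Rinv_l; lra.
Qed.

Lemma ln_alpha_pos : 0 < ln (alpha p).
Proof. rewrite <- ln_1; apply ln_increasing; [lra | exact alpha_gt1]. Qed.

Lemma eta_mobius (eps : R) : 0 < 1 + alpha p * eps ->
  eta p eps = ln ((alpha p + eps) / (1 + alpha p * eps)) / ln (alpha p).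
Proof.
  intros Heps; unfold eta; do 2 f_equal.
  unfold alpha in *.
  assert (0 < 1 - p + p * eps).
  { replace (1 - p + p * eps) with ((1 - p) * (1 + p / (1 - p) * eps)) by (field; lra).
    apply Rmult_lt_0_compat; lra. }
  field; lra.
Qed.

Lemma eta_lt_eta (e1 e2 : R) : 0 < 1 + alpha p * e1 -> e1 < e2 ->
  eta p e2 < eta p e1.
Proof.
  intros He1 He12; pose proof alpha_gt1 as Ha.
  assert (He2 : 0 < 1 + alpha p * e2) by nra.
  rewrite !eta_mobius by assumption.
  unfold Rdiv at 1 3; apply Rmult_lt_compat_r; [apply Rinv_0_lt_compat, ln_alpha_pos|].
  set (a := alpha p) in *.
  apply ln_increasing.
  - apply Rdiv_lt_0_compat; nra.
  - apply (Rmult_lt_reg_r ((1 + a * e1) * (1 + a * e2))); [nra|].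
    replace ((a + e2) / (1 + a * e2) * ((1 + a * e1) * (1 + a * e2)))
      with ((a + e2) * (1 + a * e1)) by (field; lra).
    replace ((a + e1) / (1 + a * e1) * ((1 + a * e1) * (1 + a * e2)))
      with ((a + e1) * (1 + a * e2)) by (field; lra).
    assert (0 < (a * a - 1) * (e2 - e1)) by (apply Rmult_lt_0_compat; nra).
    nra.
Qed.

Lemma eta_lt_eta_iff (e1 e2 : R) :
  0 < 1 + alpha p * e1 -> 0 < 1 + alpha p * e2 ->
  (eta p e2 < eta p e1 <-> e1 < e2).
Proof.
  intros He1 He2; split; [|now apply eta_lt_eta].
  intros Hlt; destruct (Rtotal_order e1 e2) as [H12 | [-> | H21]]; [exact H12 | lra |].
  pose proof (eta_lt_eta e2 e1 He2 H21); lra.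
Qed.

Lemma eta_inv_domain (x : R) : -1 < x -> 0 < 1 + alpha p * eta_inv p x.
Proof.
  intros Hx; pose proof alpha_gt1 as Ha; unfold eta_inv.
  assert (H := Rpower_gt_1 (alpha p) (x + 1) Ha ltac:(lra)).
  rewrite Rpower_plus, Rpower_1 in * by lra.
  set (t := Rpower (alpha p) x) in *; set (a := alpha p) in *.
  replace (1 + a * ((a - t) / (t * a - 1))) with ((a * a - 1) / (t * a - 1))
    by (field; lra).
  apply Rdiv_lt_0_compat; nra.
Qed.

Lemma eta_eta_inv (x : R) : -1 < x -> eta p (eta_inv p x) = x.
Proof.
  intros Hx; pose proof alpha_gt1 as Ha; pose proof ln_alpha_pos as Hln.
  rewrite eta_mobius by now apply eta_inv_domain.
  assert (H := Rpower_gt_1 (alpha p) (x + 1) Ha ltac:(lra)).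
  unfold eta_inv; rewrite Rpower_plus, Rpower_1 in * by lra.
  replace ((alpha p + (alpha p - Rpower (alpha p) x) / (Rpower (alpha p) x * alpha p - 1))
      / (1 + alpha p * ((alpha p - Rpower (alpha p) x) / (Rpower (alpha p) x * alpha p - 1))))
    with (Rpower (alpha p) x).
  - unfold Rpower at 1; rewrite ln_exp; field; lra.
  - field; split; nra.
Qed.

Lemma eta_lt_iff (eps x : R) : 0 < 1 + alpha p * eps -> -1 < x ->
  (eta p eps < x <-> eta_inv p x < eps).
Proof.
  intros Heps Hx; rewrite <- (eta_eta_inv x Hx) at 1.
  apply eta_lt_eta_iff; [apply eta_inv_domain|]; assumption.
Qed.

Lemma lt_eta_iff (eps x : R) : 0 < 1 + alpha p * eps -> -1 < x ->
  (x < eta p eps <-> eps < eta_inv p x).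
Proof.
  intros Heps Hx; rewrite <- (eta_eta_inv x Hx) at 1.
  apply eta_lt_eta_iff; [|apply eta_inv_domain]; assumption.
Qed.

Lemma eta_inv_lt_eta_inv (x y : R) : -1 < x -> x < y -> eta_inv p y < eta_inv p x.
Proof.
  intros Hx Hxy; apply lt_eta_iff; [apply eta_inv_domain; lra | exact Hx |].
  rewrite eta_eta_inv; lra.
Qed.

Lemma eta_near (x G : R) : 0 < G -> -1 < x - G ->
  exists delta, 0 < delta /\ forall eps, 0 < 1 + alpha p * eps ->
    Rabs (eps - eta_inv p x) < delta -> Rabs (eta p eps - x) < G.
Proof.
  intros HG Hx.
  assert (Hup := eta_inv_lt_eta_inv x (x + G) ltac:(lra) ltac:(lra)).
  assert (Hlo := eta_inv_lt_eta_inv (x - G) x Hx ltac:(lra)).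
  exists (Rmin (eta_inv p x - eta_inv p (x + G)) (eta_inv p (x - G) - eta_inv p x)).
  split; [apply Rmin_glb_lt; lra|].
  intros eps Heps Hclose; apply Rabs_def2 in Hclose as [Hc1 Hc2].
  pose proof (Rmin_l (eta_inv p x - eta_inv p (x + G)) (eta_inv p (x - G) - eta_inv p x)).
  pose proof (Rmin_r (eta_inv p x - eta_inv p (x + G)) (eta_inv p (x - G) - eta_inv p x)).
  assert (eta p eps < x + G) by (apply eta_lt_iff; lra).
  assert (x - G < eta p eps) by (apply lt_eta_iff; lra).
  apply Rabs_def1; lra.
Qed.

End Eta.

Lemma r_aux_eq_m (m : nat) (e : R) (k : nat) :
  0 <= 1 - INR m * e -> INR (S k) * (1 - INR m * e) < e ->
  snd (r_aux m e k) = INR (S k) * (INR m * e - 1) + e /\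
  (k <> 0%nat -> fst (r_aux m e k) = m).
Proof.
  intros Hd; induction k as [|k IH]; intros Hk.
  - cbn [r_aux fst snd]; rewrite S_INR; split; [simpl; ring | lia].
  - rewrite S_INR in Hk.
    destruct IH as [IH _]; [nra|].
    cbn [r_aux fst snd]; rewrite IH.
    destruct (Rlt_dec 1 (INR (S k) * (INR m * e - 1) + e + INR m * e)) as [_|Hn].
    + cbn [fst snd]; split; [rewrite !S_INR; ring | easy].
    + exfalso; apply Hn; rewrite S_INR in *; nra.
Qed.

Lemma r_aux_eq_Sm (m : nat) (e : R) (k : nat) :
  0 <= INR (S m) * e - 1 -> INR (S k) * (INR (S m) * e - 1) <= e ->
  snd (r_aux m e k) = INR (S k) * (INR (S m) * e - 1) /\ fst (r_aux m e k) = S m.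
Proof.
  assert (Hme : INR m * e = INR (S m) * e - 1 + 1 - e) by (rewrite S_INR; ring).
  set (d := INR (S m) * e - 1) in *.
  intros Hd; induction k as [|k IH]; intros Hk.
  - cbn [r_aux fst snd]; split; [change (INR 1) with 1; unfold d; ring | easy].
  - rewrite S_INR in Hk.
    destruct IH as [IH _]; [lra|].
    cbn [r_aux fst snd]; rewrite IH.
    destruct (Rlt_dec 1 (INR (S k) * d + INR m * e)) as [Hlt|_]; [lra|].
    cbn [fst snd]; split; [unfold d; rewrite (S_INR (S k)); ring | easy].
Qed.

Lemma r_seq_eq_of_near (m r i : nat) (e : R) : (2 <= i)%nat ->
  1 / INR (S m) < e < 1 / INR m ->
  INR (S r) * Rabs (INR r * e - 1) < 1 ->
  INR i * Rabs (INR r * e - 1) < e ->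
  r_seq m e i = r.
Proof.
  intros Hi [Hlo Hhi] Hfar Hnear.
  assert (Hm1 : 1 < INR (S m) * e).
  { apply inv_lt_iff_one_lt_mul; [apply lt_0_INR; lia | exact Hlo]. }
  assert (Hm0 : INR m * e < 1).
  { destruct m as [|m]; [simpl; lra|].
    apply lt_inv_iff_mul_lt_one; [apply lt_0_INR; lia | exact Hhi]. }
  unfold r_seq; destruct i as [|k]; [lia|]; simpl pred.
  destruct (Nat.lt_trichotomy m r) as [Hlt|[<-|Hgt]].
  - destruct (Nat.eq_dec (S m) r) as [<-|Hne].
    + rewrite Rabs_pos_eq in Hnear by lra.
      apply (r_aux_eq_Sm m e k); lra.
    + exfalso.
      assert (Hr : INR (S m) + 1 <= INR r) by (rewrite <- S_INR; apply le_INR; lia).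
      assert (He : 0 < e) by (pose proof (pos_INR (S m)); nra).
      assert (Hgap : e < INR r * e - 1) by nra.
      rewrite Rabs_pos_eq in Hfar by lra; rewrite S_INR in Hfar.
      nra.
  - rewrite Rabs_left1 in Hnear by lra.
    apply (r_aux_eq_m m e k); [lra | lra | lia].
  - exfalso.
    assert (Hr : INR r + 1 <= INR m) by (rewrite <- S_INR; apply le_INR; lia).
    assert (He : 0 < e) by (pose proof (pos_INR (S m)); nra).
    assert (Hgap : INR r * e < 1 - e) by nra.
    rewrite Rabs_left1 in Hfar by lra; rewrite S_INR in Hfar.
    pose proof (pos_INR r); nra.
Qed.

Lemma close_to_inv_bounds (r i : nat) (e : R) : (1 <= r)%nat -> (2 <= i)%nat ->
  Rabs (e - 1 / INR r) < / (INR r * (INR i * INR r + 1)) ->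
  INR (S r) * Rabs (INR r * e - 1) < 1 /\ INR i * Rabs (INR r * e - 1) < e.
Proof.
  intros Hr Hi Hclose.
  assert (HR : 1 <= INR r) by (apply (le_INR 1); lia).
  assert (HN : 2 <= INR i) by (apply (le_INR 2); lia).
  rewrite S_INR; set (R0 := INR r) in *; set (N := INR i) in *.
  set (G := / (R0 * (N * R0 + 1))) in *.
  assert (HG : R0 * G * (N * R0 + 1) = 1) by (unfold G; field; nra).
  assert (HGx : 1 / R0 - G = N * R0 * G) by (unfold G; field; nra).
  assert (Hd : Rabs (R0 * e - 1) < R0 * G).
  { replace (R0 * e - 1) with (R0 * (e - 1 / R0)) by (field; lra).
    rewrite Rabs_mult, Rabs_pos_eq by lra.
    apply Rmult_lt_compat_l; lra. }
  apply Rabs_def2 in Hclose as [_ Hlo].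
  assert (HG0 : 0 < R0 * G) by (unfold G; apply Rmult_lt_0_compat, Rinv_0_lt_compat; nra).
  split.
  - assert (0 < R0 * G * ((N - 1) * R0)) by (apply Rmult_lt_0_compat; nra).
    assert (R0 * G * (R0 + 1) < 1) by nra.
    apply Rle_lt_trans with ((R0 + 1) * (R0 * G)); [|lra].
    apply Rmult_le_compat_l; lra.
  - apply Rlt_le_trans with (N * (R0 * G)); [apply Rmult_lt_compat_l; lra | lra].
Qed.

Theorem lemma3 (p : R) (hp : 1 / 2 < p < 1) (r : nat) (hr : (1 <= r)%nat) :
  forall i : nat, (2 <= i)%nat ->
  exists delta : R, 0 < delta /\
    forall (eps : R) (m : nat),
      0 <= eps < 1 ->
      (1 <= m)%nat ->
      eps_seq p m < eps < eps_seq p (S m) ->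
      Rabs (eps - eps_seq p r) < delta ->
      (r = 1%nat -> eps_seq p 1 < eps) ->
      r_seq m (eta p eps) i = r.
Proof.
  intros i Hi.
  assert (HR : 1 <= INR r) by (apply (le_INR 1); lia).
  assert (HN : 2 <= INR i) by (apply (le_INR 2); lia).
  set (G := / (INR r * (INR i * INR r + 1))).
  assert (HG : 0 < G < 1 / INR r).
  { unfold G; split; [apply Rinv_0_lt_compat; nra|].
    unfold Rdiv; rewrite Rmult_1_l; apply Rinv_lt_contravar; [apply Rmult_lt_0_compat |]; nra. }
  destruct (eta_near p hp (1 / INR r) G) as [delta [Hdelta Hnear]]; [lra | lra |].
  exists delta; split; [exact Hdelta|].
  intros eps m Heps Hm [Hlo Hhi] Hclose _.
  assert (Hdom : 0 < 1 + alpha p * eps) by (pose proof (alpha_gt1 p hp); nra).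
  assert (HM : 0 < 1 / INR m) by (apply Rdiv_lt_0_compat; [lra | apply lt_0_INR; lia]).
  assert (HSM : 0 < 1 / INR (S m)) by (apply Rdiv_lt_0_compat; [lra | apply lt_0_INR; lia]).
  destruct (close_to_inv_bounds r i (eta p eps) hr Hi (Hnear eps Hdom Hclose)) as [Hfar Hwin].
  apply r_seq_eq_of_near; [exact Hi | split | exact Hfar | exact Hwin].
  - apply lt_eta_iff; [exact hp | exact Hdom | lra | exact Hhi].
  - apply eta_lt_iff; [exact hp | exact Hdom | lra | exact Hlo].
Qed.
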